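(* Let $\alpha_i,\beta_i,\gamma_i,\delta_i\in(0,\pi)$ satisfy $\alpha_i\pm\beta_i\pm\gamma_i\pm\delta_i\not\equiv0\pmod{2\pi}$ for all choices of signs. Then $\sin\overline{\alpha}_i,\sin\overline{\beta}_i,\sin\overline{\gamma}_i,\sin\overline{\delta}_i\neq0$ (so $a_i,b_i,c_i,d_i$ are well-defined) and \[a_ib_i,\ a_ic_i,\ a_id_i,\ b_ic_i,\ b_id_i,\ c_id_i,\ M_i\notin\{0,1\}.\]
   Context: $\sigma_i=(\alpha_i+\beta_i+\gamma_i+\delta_i)/2$, $\overline{\alpha}_i=\sigma_i-\alpha_i$, $\overline{\beta}_i=\sigma_i-\beta_i$, $\overline{\gamma}_i=\sigma_i-\gamma_i$, $\overline{\delta}_i=\sigma_i-\delta_i$; $a_i=\sin\alpha_i/\sin\overline{\alpha}_i$, $b_i=\sin\beta_i/\sin\overline{\beta}_i$, $c_i=\sin\gamma_i/\sin\overline{\gamma}_i$, $d_i=\sin\delta_i/\sin\overline{\delta}_i$, $M_i=a_ib_ic_id_i$. *)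

From Stdlib Require Import Reals ZArith.
Open Scope R_scope.

Definition sgn (b : bool) : R := if b then 1 else -1.

Definition not_cong0_2pi (x : R) : Prop := forall k : Z, x <> 2 * PI * IZR k.

Definition sigma (al be ga de : R) : R := (al + be + ga + de) / 2.

Definition bar (x al be ga de : R) : R := sigma al be ga de - x.

Definition ratio (x al be ga de : R) : R := sin x / sin (bar x al be ga de).

Definition coef_a (al be ga de : R) : R := ratio al al be ga de.
Definition coef_b (al be ga de : R) : R := ratio be al be ga de.
Definition coef_c (al be ga de : R) : R := ratio ga al be ga de.
Definition coef_d (al be ga de : R) : R := ratio de al be ga de.

Definition coef_M (al be ga de : R) : R :=
  coef_a al be ga de * coef_b al be ga de * coef_c al be ga de * coef_d al be ga de.

Definition not01 (x : R) : Prop := x <> 0 /\ x <> 1.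

From Pilot Require Import Defs.
From Stdlib Require Import Reals ZArith Lra.
Open Scope R_scope.

(* With S the half-sum, 2 sin x sin y = cos (x - y) - cos (x + y) turns the
   equation a b = 1, i.e. sin al sin be = sin (S - al) sin (S - be), into
   cos (al + be) = cos (ga + de); similarly M = 1 factors as
   (cos (al - be) - cos (ga - de)) (cos (al + be) - cos (ga + de)) = 0.
   Equal cosines force x = y or x = -y modulo 2 pi, and in each case this is
   one of the excluded relations al +- be +- ga +- de = 0 modulo 2 pi.  The
   same relations keep every sin (S - x) = sin ((+-al +- be +- ga +- de) / 2)
   away from 0, while sin x > 0 on (0, pi). *)

Lemma not_cong0_2pi_opp x : not_cong0_2pi x -> not_cong0_2pi (- x).
Proof.
  intros hx k hk. apply (hx (- k)%Z). rewrite opp_IZR. lra.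
Qed.

Lemma sin_neq0_of_not_cong0_2pi x : not_cong0_2pi (2 * x) -> sin x <> 0.
Proof.
  intros hx hsin. destruct (sin_eq_0_0 x hsin) as [k hk].
  apply (hx k). rewrite hk. ring.
Qed.

Lemma sin_half_neq0_of_not_cong0_2pi x : not_cong0_2pi x -> sin (x / 2) <> 0.
Proof.
  intros hx. apply sin_neq0_of_not_cong0_2pi.
  now replace (2 * (x / 2)) with x by field.
Qed.

Lemma cos_neq_of_not_cong0_2pi x y :
  not_cong0_2pi (x - y) -> not_cong0_2pi (x + y) -> cos x <> cos y.
Proof.
  intros hdiff hsum hcos.
  assert (hprod := form2 x y).
  rewrite hcos, Rminus_diag in hprod.
  apply (sin_half_neq0_of_not_cong0_2pi _ hdiff), (Rmult_eq_reg_l (-2)); [| lra].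
  apply (Rmult_eq_reg_r (sin ((x + y) / 2))); [lra |].
  exact (sin_half_neq0_of_not_cong0_2pi _ hsum).
Qed.

Lemma sin_pos_neq0 x : 0 < x < PI -> sin x <> 0.
Proof. intros hx. apply Rgt_not_eq, sin_gt_0; apply hx. Qed.

Lemma sgn_negb b : sgn (negb b) = - sgn b.
Proof. destruct b; simpl; ring. Qed.

Section SignPatterns.

Variables al be ga de : R.
Hypothesis hsigns : forall s1 s2 s3 : bool,
  not_cong0_2pi (al + sgn s1 * be + sgn s2 * ga + sgn s3 * de).

Lemma not_cong0_2pi_sign_pattern e :
  (exists s0 s1 s2 s3 : bool, e = sgn s0 * al + sgn s1 * be + sgn s2 * ga + sgn s3 * de) ->
  not_cong0_2pi e.
Proof.
  intros (s0 & s1 & s2 & s3 & ->). destruct s0; simpl sgn.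
  - replace (1 * al) with al by ring. apply hsigns.
  - replace (-1 * al + sgn s1 * be + sgn s2 * ga + sgn s3 * de)
      with (- (al + sgn (negb s1) * be + sgn (negb s2) * ga + sgn (negb s3) * de))
      by (rewrite !sgn_negb; ring).
    apply not_cong0_2pi_opp, hsigns.
Qed.

End SignPatterns.

Definition sin_ratio (S x : R) : R := sin x / sin (S - x).

Lemma prod_sin_sin x y : 2 * sin x * sin y = cos (x - y) - cos (x + y).
Proof. rewrite cos_minus, cos_plus. ring. Qed.

Lemma prod_sin_sin_complement S x y z w : x + y + z + w = 2 * S ->
  2 * sin (S - x) * sin (S - y) = cos (x - y) - cos (z + w).
Proof.
  intros hsum. rewrite prod_sin_sin.
  replace (S - x - (S - y)) with (- (x - y)) by ring.
  replace (S - x + (S - y)) with (z + w) by lra.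
  now rewrite cos_neg.
Qed.

Lemma sin_ratio_neq0 S x : sin x <> 0 -> sin (S - x) <> 0 -> sin_ratio S x <> 0.
Proof.
  intros hx hSx. unfold sin_ratio, Rdiv.
  apply Rmult_integral_contrapositive_currified; [exact hx | exact (Rinv_neq_0_compat _ hSx)].
Qed.

Section SineRatios.

Variables S x y z w : R.
Hypothesis hsum : x + y + z + w = 2 * S.
Hypotheses (hx : sin x <> 0) (hy : sin y <> 0) (hz : sin z <> 0) (hw : sin w <> 0).
Hypotheses (hSx : sin (S - x) <> 0) (hSy : sin (S - y) <> 0)
  (hSz : sin (S - z) <> 0) (hSw : sin (S - w) <> 0).

Lemma sin_ratio_mul2_eq1 :
  sin_ratio S x * sin_ratio S y = 1 -> sin x * sin y = sin (S - x) * sin (S - y).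
Proof.
  intros h. rewrite <- (Rmult_1_l (sin (S - x) * _)), <- h.
  unfold sin_ratio. field. now split.
Qed.

Lemma sin_ratio_mul2_not01 : cos (x + y) <> cos (z + w) ->
  not01 (sin_ratio S x * sin_ratio S y).
Proof.
  intros hcos. split.
  - apply Rmult_integral_contrapositive_currified; now apply sin_ratio_neq0.
  - intros h. apply hcos.
    assert (hsin := sin_ratio_mul2_eq1 h).
    assert (h1 := prod_sin_sin x y). assert (h2 := prod_sin_sin_complement S x y z w hsum).
    nra.
Qed.

Lemma sin_ratio_mul4_not01 : cos (x + y) <> cos (z + w) -> cos (x - y) <> cos (z - w) ->
  not01 (sin_ratio S x * sin_ratio S y * sin_ratio S z * sin_ratio S w).
Proof.
  intros hplus hminus. split.
  - repeat match goal with |- _ * _ <> 0 => apply Rmult_integral_contrapositive_currified end;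
      now apply sin_ratio_neq0.
  - intros h.
    assert (hsin : sin x * sin y * (sin z * sin w)
                   = sin (S - x) * sin (S - y) * (sin (S - z) * sin (S - w))).
    { rewrite <- (Rmult_1_l (sin (S - x) * _ * _)), <- h.
      unfold sin_ratio. field. now repeat split. }
    assert (hxy := prod_sin_sin x y). assert (hzw := prod_sin_sin z w).
    assert (hSxy := prod_sin_sin_complement S x y z w hsum).
    assert (hSzw := prod_sin_sin_complement S z w x y ltac:(lra)).
    assert (hfactor : (cos (x - y) - cos (z - w)) * (cos (x + y) - cos (z + w)) = 0).
    { transitivity ((2 * sin x * sin y) * (2 * sin z * sin w)
                    - (2 * sin (S - x) * sin (S - y)) * (2 * sin (S - z) * sin (S - w))).
      - rewrite hSxy, hSzw, hxy, hzw. ring.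
      - nra. }
    destruct (Rmult_integral _ _ hfactor); lra.
Qed.

End SineRatios.

Ltac sign_pattern :=
  eapply not_cong0_2pi_sign_pattern;
  [ eassumption | do 4 (exists true + exists false); unfold sgn; lra ].

Ltac side_condition :=
  first [ assumption | lra | apply cos_neq_of_not_cong0_2pi; sign_pattern ].

Theorem lemma2 (al be ga de : R)
  (hal : 0 < al < PI) (hbe : 0 < be < PI) (hga : 0 < ga < PI) (hde : 0 < de < PI)
  (hsigns : forall s1 s2 s3 : bool,
      not_cong0_2pi (al + sgn s1 * be + sgn s2 * ga + sgn s3 * de)) :
  let a := coef_a al be ga de in
  let b := coef_b al be ga de in
  let c := coef_c al be ga de in
  let d := coef_d al be ga de in
  (sin (bar al al be ga de) <> 0 /\ sin (bar be al be ga de) <> 0 /\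
   sin (bar ga al be ga de) <> 0 /\ sin (bar de al be ga de) <> 0) /\
  (not01 (a * b) /\ not01 (a * c) /\ not01 (a * d) /\
   not01 (b * c) /\ not01 (b * d) /\ not01 (c * d) /\
   not01 (coef_M al be ga de)).
Proof.
  intros a b c d.
  set (S := Defs.sigma al be ga de).
  assert (hsum : al + be + ga + de = 2 * S) by (unfold S, Defs.sigma; field).
  assert (hbar : sin (S - al) <> 0 /\ sin (S - be) <> 0 /\
                 sin (S - ga) <> 0 /\ sin (S - de) <> 0)
    by (repeat split; apply sin_neq0_of_not_cong0_2pi; sign_pattern).
  split; [exact hbar |].
  destruct hbar as (? & ? & ? & ?).
  pose proof (sin_pos_neq0 _ hal); pose proof (sin_pos_neq0 _ hbe).
  pose proof (sin_pos_neq0 _ hga); pose proof (sin_pos_neq0 _ hde).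
  change a with (sin_ratio S al); change b with (sin_ratio S be);
  change c with (sin_ratio S ga); change d with (sin_ratio S de).
  refine (conj _ (conj _ (conj _ (conj _ (conj _ (conj _ _)))))).
  - apply (sin_ratio_mul2_not01 S al be ga de); side_condition.
  - apply (sin_ratio_mul2_not01 S al ga be de); side_condition.
  - apply (sin_ratio_mul2_not01 S al de be ga); side_condition.
  - apply (sin_ratio_mul2_not01 S be ga al de); side_condition.
  - apply (sin_ratio_mul2_not01 S be de al ga); side_condition.
  - apply (sin_ratio_mul2_not01 S ga de al be); side_condition.
  - apply (sin_ratio_mul4_not01 S al be ga de); side_condition.
Qed.
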